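(* Let $P\in\mathbb{C}^{m\times m}$ be positive definite. Then for every Hermitian $H\in\mathbb{C}^{m\times m}$ with $\mathrm{tr}(H)=0$, $$\frac{\mathrm{tr}(H^2P)}{\mathrm{tr}(P)}-\frac{\mathrm{tr}(HP)^2}{\mathrm{tr}(P)^2}\ \ge\ \frac{\|H\|_F^2}{\mathrm{tr}(P)\,\mathrm{tr}(P^{-1})}.$$ *)

(* C : numClosedFieldType plays the role of the complex numbers. *)
From HB Require Import structures.
From mathcomp Require Import all_boot all_order all_algebra.
Set Implicit Arguments. Unset Strict Implicit. Unset Printing Implicit Defensive.
Import Order.TTheory GRing.Theory Num.Theory.
Local Open Scope ring_scope.

Definition hermitian_mx (C : numClosedFieldType) (m : nat) (M : 'M[C]_m) : Prop :=
  M = map_mx Num.conj (M^T).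

Definition posdef_mx (C : numClosedFieldType) (m : nat) (P : 'M[C]_m) : Prop :=
  hermitian_mx P /\
  forall x : 'cV[C]_m, x != 0 -> 0 < (map_mx Num.conj (x^T) *m P *m x) 0 0.

Definition frob_norm2 (C : numClosedFieldType) (m : nat) (M : 'M[C]_m) : C :=
  \sum_(i < m) \sum_(j < m) `|M i j| ^+ 2.

(* Write mu := tr(HP)/tr(P) and G := H - mu I, again Hermitian. Then
   tr(G^2 P) = tr(H^2 P) - tr(HP)^2/tr(P), while tr(G^2) = tr(H^2) + m mu^2
   >= tr(H^2) = |H|_F^2 because tr H = 0.  It remains to see that
   tr(G G^* ) <= tr(G G^* P) tr(P^-1): writing P = U^* diag(d) U, both traces
   are sums of the nonnegative diagonal entries of (UG)(UG)^*, weighted by 1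
   and by d_i respectively, and d_i tr(P^-1) >= d_i d_i^-1 = 1. *)
From HB Require Import structures.
From mathcomp Require Import all_boot all_order all_algebra.
From mathcomp Require Import sesquilinear spectral ring.
Import Order.TTheory GRing.Theory Num.Theory.
Local Open Scope ring_scope.
Local Open Scope sesquilinear_scope.

Lemma mxtrace_shift_sqr_mul (R : comPzRingType) n (H P : 'M[R]_n) (mu : R) :
  \tr ((H - mu%:M) *m (H - mu%:M) *m P)
    = \tr (H *m H *m P) - 2%:R * mu * \tr (H *m P) + mu ^+ 2 * \tr P.
Proof.
rewrite mulmxBl !mulmxBr mul_scalar_mx mul_mx_scalar -scalar_mxM.
rewrite !mulmxBl -!scalemxAl mul_scalar_mx !linearB /= !mxtraceZ.
ring.
Qed.

Section ConjugateTranspose.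
Variable C : numClosedFieldType.

Lemma trmxC_mul n p q (A : 'M[C]_(n, p)) (B : 'M[C]_(p, q)) :
  (A *m B)^t* = B^t* *m A^t*.
Proof. by rewrite trmx_mul map_mxM. Qed.

Lemma mxtrace_trmxC n (M : 'M[C]_n) : \tr (M^t*) = Num.conj (\tr M).
Proof. by rewrite /mxtrace rmorph_sum; apply: eq_bigr => i _; rewrite !mxE. Qed.

Lemma mulmx_trmxC_diag_ge0 n p (A : 'M[C]_(n, p)) i : 0 <= (A *m A^t*) i i.
Proof.
by rewrite mxE; apply: sumr_ge0 => j _; rewrite !mxE -normCK exprn_ge0.
Qed.

Lemma frob_norm2_hermitian n (M : 'M[C]_n) :
  hermitian_mx M -> frob_norm2 M = \tr (M *m M).
Proof.
move=> hM; rewrite /frob_norm2 /mxtrace; apply: eq_bigr => i _.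
rewrite mxE; apply: eq_bigr => j _.
by rewrite normCK; congr (_ * _); rewrite {2}hM !mxE.
Qed.

Lemma mxtrace_mul_hermitian_real n (A B : 'M[C]_n) :
  hermitian_mx A -> hermitian_mx B -> \tr (A *m B) \is Num.real.
Proof.
move=> hA hB; apply/CrealP.
by rewrite -mxtrace_trmxC trmxC_mul -hA -hB mxtrace_mulC.
Qed.

End ConjugateTranspose.

Section PositiveDefinite.
Context {C : numClosedFieldType} {n : nat} {P : 'M[C]_n}.
Hypothesis P_posdef : posdef_mx P.

Local Notation U := (spectralmx P).
Local Notation d := (spectral_diag P).

Lemma posdef_spectralE : P = U^t* *m diag_mx d *m U.
Proof.
rewrite -invmx_unitary ?spectral_unitarymx //; apply/orthomx_spectralP.
by apply/normalmxP; rewrite -P_posdef.1.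
Qed.

Lemma posdef_spectral_diag_gt0 i : 0 < d 0 i.
Proof.
set e : 'cV[C]_n := delta_mx i 0; set x := U^t* *m e.
have x_neq0 : x != 0.
  apply: contraTneq isT => x0; have := congr1 (mulmx U) x0.
  rewrite mulmxA (unitarymxP (spectral_unitarymx P)) mul1mx mulmx0.
  by move/matrixP/(_ i 0); rewrite !mxE !eqxx => /eqP; rewrite oner_eq0.
have := P_posdef.2 x x_neq0.
rewrite /x trmxC_mul trmxCK [X in _ *m X *m _]posdef_spectralE.
rewrite !mulmxA !mulmxtVK ?spectral_unitarymx //.
suff -> : e^t* = delta_mx 0 i by rewrite -rowE -colE !mxE eqxx mulr1n.
by apply/matrixP => a b; rewrite !mxE rmorph_nat andbC.
Qed.

Lemma posdef_invmxE : invmx P = U^t* *m diag_mx (map_mx GRing.inv d) *m U.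
Proof.
have dd' : diag_mx d *m diag_mx (map_mx GRing.inv d) = 1%:M.
  apply/matrixP => a b; rewrite mul_mx_diag !mxE.
  have [<-|_] := eqVneq a b; last by rewrite !mulr0n mul0r.
  by rewrite mulfV ?gt_eqF ?posdef_spectral_diag_gt0.
have PP' : P *m (U^t* *m diag_mx (map_mx GRing.inv d) *m U) = 1%:M.
  rewrite {1}posdef_spectralE !mulmxA mulmxtVK ?spectral_unitarymx //.
  rewrite -(mulmxA _ (diag_mx d)) dd' mulmx1.
  exact: mulmx1C (unitarymxP (spectral_unitarymx P)).
by rewrite -[RHS](mulKmx (mulmx1_unit PP').1) PP' mulmx1.
Qed.

Lemma mxtrace_posdef : \tr P = \sum_i d 0 i.
Proof.
rewrite {1}posdef_spectralE mxtrace_mulC mulmxA.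
by rewrite (unitarymxP (spectral_unitarymx P)) mul1mx mxtrace_diag.
Qed.

Lemma mxtrace_invmx_posdef : \tr (invmx P) = \sum_i (d 0 i)^-1.
Proof.
rewrite posdef_invmxE mxtrace_mulC mulmxA.
rewrite (unitarymxP (spectral_unitarymx P)) mul1mx mxtrace_diag.
by apply: eq_bigr => i _; rewrite mxE.
Qed.

Lemma mxtrace_gram_le_invmx p (A : 'M[C]_(n, p)) :
  \tr (A *m A^t*) <= \tr (A *m A^t* *m P) * \tr (invmx P).
Proof.
set W := U *m A.
have WWE : W *m W^t* = U *m A *m A^t* *m U^t* by rewrite trmxC_mul !mulmxA.
have -> : \tr (A *m A^t*) = \sum_i (W *m W^t*) i i.
  rewrite -/(mxtrace _) WWE -!mulmxA [RHS]mxtrace_mulC !mulmxA.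
  by rewrite mulmxKtV ?spectral_unitarymx.
have -> : \tr (A *m A^t* *m P) = \sum_i (W *m W^t*) i i * d 0 i.
  rewrite [in LHS]posdef_spectralE !mulmxA mxtrace_mulC !mulmxA -WWE.
  by rewrite /mxtrace; apply: eq_bigr => i _; rewrite mul_mx_diag mxE.
rewrite mulr_suml; apply: ler_sum => i _.
have d_trinv_ge1 : 1 <= d 0 i * \tr (invmx P).
  rewrite mxtrace_invmx_posdef (bigD1 i) //= mulrDr.
  rewrite mulfV ?gt_eqF ?posdef_spectral_diag_gt0 // lerDl.
  by rewrite mulr_ge0 ?sumr_ge0 // => [|j _];
    rewrite ?invr_ge0 ltW ?posdef_spectral_diag_gt0.
by rewrite -mulrA -[leLHS]mulr1 ler_wpM2l ?mulmx_trmxC_diag_ge0.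
Qed.

Lemma mxtrace_posdef_gt0 : (0 < n)%N -> 0 < \tr P.
Proof.
move=> n_gt0; rewrite mxtrace_posdef (bigD1 (Ordinal n_gt0)) //=.
rewrite ltr_pwDl ?posdef_spectral_diag_gt0 ?sumr_ge0 // => i _.
exact/ltW/posdef_spectral_diag_gt0.
Qed.

Lemma mxtrace_invmx_posdef_gt0 : (0 < n)%N -> 0 < \tr (invmx P).
Proof.
move=> n_gt0; rewrite mxtrace_invmx_posdef (bigD1 (Ordinal n_gt0)) //=.
rewrite ltr_pwDl ?invr_gt0 ?posdef_spectral_diag_gt0 ?sumr_ge0 // => i _.
by rewrite invr_ge0; exact/ltW/posdef_spectral_diag_gt0.
Qed.

Lemma posdef_variance_ge (H : 'M[C]_n) : hermitian_mx H -> \tr H = 0 ->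
  \tr (H *m H)
    <= (\tr (H *m H *m P) - \tr (H *m P) ^+ 2 / \tr P) * \tr (invmx P).
Proof.
move=> hH trH0; set S := \tr P; set Y := \tr (H *m P); set mu := Y / S.
have S_real : S \is Num.real.
  rewrite ger0_real // /S mxtrace_posdef sumr_ge0 // => i _.
  exact/ltW/posdef_spectral_diag_gt0.
have mu_real : mu \is Num.real.
  by rewrite rpredM ?rpredV // mxtrace_mul_hermitian_real //; exact: P_posdef.1.
set G := H - mu%:M.
have hG : hermitian_mx G.
  by rewrite /hermitian_mx /G linearB /= tr_scalar_mx map_mxB /= map_scalar_mx
    /= conj_Creal -?hH.
have trGG : \tr (G *m G) = \tr (H *m H) + mu ^+ 2 * n%:R.
  by rewrite -[G *m G]mulmx1 mxtrace_shift_sqr_mul !mulmx1 trH0 mxtrace1; ring.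
have trGGP : \tr (G *m G *m P) = \tr (H *m H *m P) - Y ^+ 2 / S.
  rewrite mxtrace_shift_sqr_mul -/Y -/S /mu.
  have [->|S_neq0] := eqVneq S 0; first by rewrite invr0 !(mulr0, mul0r) addr0.
  by field.
rewrite -trGGP [in X in _ <= \tr (G *m X *m P) * _]hG.
apply: le_trans (mxtrace_gram_le_invmx _ G); rewrite -hG trGG lerDl.
by rewrite mulr_ge0 ?ler0n // -realEsqr.
Qed.

End PositiveDefinite.

Theorem mainTheorem11 (C : numClosedFieldType) (m : nat) (P : 'M[C]_m) :
  posdef_mx P ->
  forall H : 'M[C]_m, hermitian_mx H -> \tr H = 0 ->
    frob_norm2 H / (\tr P * \tr (invmx P))
      <= \tr (H *m H *m P) / \tr P - (\tr (H *m P)) ^+ 2 / (\tr P) ^+ 2.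
Proof.
case: m P => [|n] P P_posdef H hH trH0.
  by rewrite /frob_norm2 /mxtrace !big_ord0 !mul0r expr0n /= mul0r subrr.
have trP_gt0 := mxtrace_posdef_gt0 P_posdef (ltn0Sn n).
have trinvP_gt0 := mxtrace_invmx_posdef_gt0 P_posdef (ltn0Sn n).
have -> : \tr (H *m H *m P) / \tr P - \tr (H *m P) ^+ 2 / \tr P ^+ 2
    = (\tr (H *m H *m P) - \tr (H *m P) ^+ 2 / \tr P) * \tr (invmx P)
      / (\tr P * \tr (invmx P)).
  by field; rewrite !gt_eqF.
rewrite frob_norm2_hermitian // ler_wpM2r ?posdef_variance_ge //.
by rewrite invr_ge0 mulr_ge0 // ltW.
Qed.
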